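(* Let $t\ge1$ and $n=2t^2+2t+1$. Let $\mathcal{C}_0\subseteq\mathbb{Z}_n^2$ be a linear $t$-error-correcting perfect code with generator matrix $G=[a~~b]$, and let $\mathcal{C}=\mathbf{x}+\mathcal{C}_0$ for some $\mathbf{x}=(x_1,x_2)\in\mathbb{Z}_n^2$. Let $\mathcal{S}$ be the set of perfect Sudoku grids with respect to $\mathcal{C}$, $\bar{\mathcal{S}}$ the set of equivalence classes of $\mathcal{S}$ under relabeling, and \[ \mathcal{G}_\mathcal{S}=\langle \tau_2^{x_1+x_2+1}\tau_1^{x_1-x_2}r,\ \tau_1^a\tau_2^b\rangle. \] Then every orbit (equivalence class) of the induced action of $\mathcal{G}_\mathcal{S}$ on $\bar{\mathcal{S}}$ has size dividing $4n$.
   Context: $\mathbb{Z}_n$ is the integers modulo $n$; Lee weight of $\mathbf{u}\in\mathbb{Z}_n^2$ is $\sum_i\min\{u_i,n-u_i\}$, Lee distance $d_L(\mathbf{u},\mathbf{v})=\mathrm{wt}_L(\mathbf{u}-\mathbf{v})$. A linear code is a submodule of $\mathbb{Z}_n^2$, with generator matrix whose rows form a minimal spanning set. A code with minimum Lee distance $d$ is perfect if, with $t=\lfloor(d-1)/2\rfloor$, the Lee balls $\mathcal{B}_t(\mathbf{c})$ around codewords cover $\mathbb{Z}_n^2$; $t$-error-correcting means $d\ge2t+1$. For $n=2t^2+2t+1$ such a code has $n$ codewords $\mathbf{c}_1,\dots,\mathbf{c}_n$, and the palette grid $\mathcal{I}_\mathcal{C}$ is the $n\times n$ array (rows/columns indexed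 by $\mathbb{Z}_n$) with entry $i$ at each position $(x,y)\in\mathcal{B}_t(\mathbf{c}_i)$. Two $n\times n$ arrays over $n$-sets are orthogonal if all $n^2$ ordered pairs of corresponding entries are distinct. A perfect Sudoku grid with respect to $\mathcal{C}$ is a Latin square of order $n$ on $[n]=\{1,\dots,n\}$ orthogonal to $\mathcal{I}_\mathcal{C}$. Relabeling: $S_1\sim S_2$ iff there is a bijection $\sigma:[n]\to[n]$ with $\sigma((S_1)_{i,j})=(S_2)_{i,j}$ for all $i,j$. Maps on arrays (indices mod $n$): $(r(A))_{i,j}=A_{n-1-j,i}$, $(\tau_1(A))_{i,j}=A_{i-1,j}$, $(\tau_2(A))_{i,j}=A_{i,j-1}$; the generated group acts by $\varphi\cdot A=\varphi(A)$. Elements of $\mathcal{G}_\mathcal{S}$ map $\mathcal{S}$ into $\mathcal{S}$ and commute with relabeling, so $\mathcal{G}_\mathcal{S}$ acts on $\bar{\mathcal{S}}$. *)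

From HB Require Import structures.
From mathcomp Require Import all_boot all_order all_fingroup all_algebra.
From mathcomp Require Import ring.
Set Implicit Arguments. Unset Strict Implicit. Unset Printing Implicit Defensive.
Import GRing.Theory.
Local Open Scope ring_scope.

Section Sudoku.
Variable n : nat.

Definition pt := ('Z_n * 'Z_n)%type.

Definition leew1 (u : 'Z_n) : nat := minn (val u) (n - val u).
Definition leew (u : pt) : nat := (leew1 u.1 + leew1 u.2)%N.
Definition leed (u v : pt) : nat := leew (u.1 - v.1, u.2 - v.2).

Definition ball (t : nat) (c : pt) : {set pt} := [set u | (leed u c <= t)%N].

Definition lin_code (a b : 'Z_n) : {set pt} := [set (k * a, k * b) | k : 'Z_n].
Definition translate (x : pt) (C0 : {set pt}) : {set pt} :=
  [set (x.1 + c.1, x.2 + c.2) | c in C0].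

Definition min_lee_dist (C : {set pt}) (d : nat) : Prop :=
  (exists c, exists c', [/\ c \in C, c' \in C, c != c' & leed c c' = d]) /\
  (forall c c', c \in C -> c' \in C -> c != c' -> (d <= leed c c')%N).

Definition perfect_code (C : {set pt}) : Prop :=
  exists d, min_lee_dist C d /\
    forall u : pt, exists2 c, c \in C & u \in ball (d.-1 %/ 2) c.

Definition t_error_correcting (C : {set pt}) (t : nat) : Prop :=
  exists d, min_lee_dist C d /\ (2 * t + 1 <= d)%N.

(* n x n arrays indexed by Z_n x Z_n, entries in an n-set (represented by Z_n) *)
Definition arr := {ffun pt -> 'Z_n}.

(* palette grid for the enumeration e (c_i = e i) of the codewords *)
Definition palette (t : nat) (e : 'Z_n -> pt) : arr :=
  [ffun p => odflt 0 [pick i | p \in ball t (e i)]].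

Definition latin (A : arr) : bool :=
  [forall i, injectiveb (fun j => A (i, j))] &&
  [forall j, injectiveb (fun i => A (i, j))].

Definition orthogonal (A B : arr) : bool :=
  injectiveb (fun p : pt => (A p, B p)).

Definition perfect_sudoku (t : nat) (e : 'Z_n -> pt) (A : arr) : bool :=
  latin A && orthogonal A (palette t e).

Definition relabel_class (A : arr) : {set arr} :=
  [set B : arr | [exists s : {perm 'Z_n}, [forall p, s (A p) == B p]]].

Definition rot_fun (A : arr) : arr := [ffun p : pt => A (-1 - p.2, p.1)].
Definition tau1_fun (A : arr) : arr := [ffun p : pt => A (p.1 - 1, p.2)].
Definition tau2_fun (A : arr) : arr := [ffun p : pt => A (p.1, p.2 - 1)].

Lemma rot_inj : injective rot_fun.
Proof.
move=> A B /ffunP H; apply/ffunP => -[i j].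
have := H (j, -1 - i); rewrite !ffunE /=.
by have -> : -1 - (-1 - i) = i :> 'Z_n by ring.
Qed.

Lemma tau1_inj : injective tau1_fun.
Proof.
move=> A B /ffunP H; apply/ffunP => -[i j].
have := H (i + 1, j); rewrite !ffunE /=.
by have -> : i + 1 - 1 = i :> 'Z_n by ring.
Qed.

Lemma tau2_inj : injective tau2_fun.
Proof.
move=> A B /ffunP H; apply/ffunP => -[i j].
have := H (i, j + 1); rewrite !ffunE /=.
by have -> : j + 1 - 1 = j :> 'Z_n by ring.
Qed.

Definition rot : {perm arr} := perm rot_inj.
Definition tau1 : {perm arr} := perm tau1_inj.
Definition tau2 : {perm arr} := perm tau2_inj.

(* NB: in {perm _}, (s * t) x = t (s x); so the function composition
   tau2^k o tau1^m o r is written r * tau1^+m * tau2^+k. *)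
Definition GS (a b : 'Z_n) (x : pt) : {group {perm arr}} :=
  <<[set (rot * tau1 ^+ val (x.1 - x.2) * tau2 ^+ val (x.1 + x.2 + 1))%g ;
         (tau1 ^+ val a * tau2 ^+ val b)%g]>>%G.

End Sudoku.

From Pilot Require Import Defs.
From mathcomp Require Import all_boot all_order all_fingroup all_algebra.
From mathcomp Require Import zify ring cyclic.
Set Implicit Arguments. Unset Strict Implicit. Unset Printing Implicit Defensive.
Local Open Scope ring_scope.
Import GRing.Theory Num.Theory.

(* The preimage L of the code in Z^2 is a lattice whose Lee balls of radius
   r = (d-1)/2 tile the plane.  The lattice points covering (r+1, 0) force
   (r+1, r) or (r+1, -r) into L, and likewise for the rotated lattice; two such
   points span a sublattice that already covers the plane, so it is all of L,
   and L is invariant under the quarter turn.  Hence k (a, b) = (b, -a) for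
   some k, which makes the first generator sigma of G_S conjugate the second
   one, tau, to tau^k.  So G_S = <tau><sigma> has order dividing n * 4, and as
   G_S commutes with relabeling, the classes of the g A form one G_S-orbit. *)

Lemma eq_pred2 (Q : int -> int -> Prop) x y x' y' : Q x y -> x = x' -> y = y' -> Q x' y'.
Proof. by move=> ? <- <-. Qed.
Arguments eq_pred2 {Q x y x' y'}.

Lemma lee_step (r x y : int) : 0 < r -> r + 1 <= `|x| + `|y| ->
  [\/ `|x - (r + 1)| + `|y - r| < `|x| + `|y|,
      `|x + (r + 1)| + `|y + r| < `|x| + `|y|,
      `|x + r| + `|y - (r + 1)| < `|x| + `|y| |
      `|x - r| + `|y + (r + 1)| < `|x| + `|y| ].
Proof.
move=> r_gt0 far.
have [[x0 y0]|[[x0 y0]|[[x0 y0]|[x0 y0]]]] :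
  (0 <= x /\ 0 <= y) \/ (x <= 0 /\ 0 <= y) \/ (x <= 0 /\ y <= 0) \/ (0 <= x /\ y <= 0) by lia.
- have [y_big|y_small] : r + 1 <= y \/ y <= r by lia.
  + by constructor 3; lia.
  + by constructor 1; lia.
- have [x_big|x_small] : r + 1 <= - x \/ - x <= r by lia.
  + by constructor 2; lia.
  + by constructor 3; lia.
- have [y_big|y_small] : r + 1 <= - y \/ - y <= r by lia.
  + by constructor 4; lia.
  + by constructor 2; lia.
- have [x_big|x_small] : r + 1 <= x \/ x <= r by lia.
  + by constructor 1; lia.
  + by constructor 4; lia.
Qed.

Section GeneratedCover.
Variables (r : int) (Q : int -> int -> Prop).
Hypotheses (r_gt0 : 0 < r) (Q0 : Q 0 0).
Hypothesis QA : forall x y, Q x y -> Q (x + (r + 1)) (y + r) /\ Q (x - (r + 1)) (y - r).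
Hypothesis QB : forall x y, Q x y -> Q (x - r) (y + (r + 1)) /\ Q (x + r) (y - (r + 1)).

Lemma generated_lattice_cover x y : exists u v, Q u v /\ `|x - u| + `|y - v| <= r.
Proof.
suff cover_le m : `|x| + `|y| <= m%:Z -> exists u v, Q u v /\ `|x - u| + `|y - v| <= r.
  exact: (cover_le (absz x + absz y)%N); lia.
elim: m x y => [|m IHm] x y norm_le; first by exists 0, 0; split=> //; lia.
have [near0|far] : `|x| + `|y| <= r \/ r + 1 <= `|x| + `|y| by lia.
  by exists 0, 0; split=> //; lia.
case: (lee_step r_gt0 far) => closer.
- have [u [v [/QA[Quv _] near]]] := IHm (x - (r + 1)) (y - r) ltac:(lia).
  by exists (u + (r + 1)), (v + r); split=> //; lia.
- have [u [v [/QA[_ Quv] near]]] := IHm (x + (r + 1)) (y + r) ltac:(lia).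
  by exists (u - (r + 1)), (v - r); split=> //; lia.
- have [u [v [/QB[Quv _] near]]] := IHm (x + r) (y - (r + 1)) ltac:(lia).
  by exists (u - r), (v + (r + 1)); split=> //; lia.
- have [u [v [/QB[_ Quv] near]]] := IHm (x - r) (y + (r + 1)) ltac:(lia).
  by exists (u + r), (v - (r + 1)); split=> //; lia.
Qed.

End GeneratedCover.

Definition perfect_lattice (r : int) (P : int -> int -> Prop) : Prop :=
  [/\ (forall x y u v : int, P x y -> P u v -> P (x - u) (y - v)),
      (forall x y : int, P x y -> x = 0 /\ y = 0 \/ 2 * r + 1 <= `|x| + `|y|) &
      (forall x y : int, exists u v, P u v /\ `|x - u| + `|y - v| <= r)].

Section PerfectLattice.
Variables (r : int) (P : int -> int -> Prop).
Hypotheses (r_gt0 : 0 < r) (PL : perfect_lattice r P).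

Lemma latticeB {x y u v} : P x y -> P u v -> P (x - u) (y - v).
Proof. by case: PL => PB _ _; apply: PB. Qed.

Lemma lattice0 : P 0 0.
Proof.
case: PL => _ _ cover; have [u [v [Puv _]]] := cover 0 0.
by apply: (eq_pred2 (latticeB Puv Puv)); rewrite subrr.
Qed.

Lemma latticeD {x y u v} : P x y -> P u v -> P (x + u) (y + v).
Proof.
move=> Pxy /(latticeB lattice0) Pmuv.
by apply: (eq_pred2 (latticeB Pxy Pmuv)); rewrite sub0r opprK.
Qed.

Lemma lattice_sep {x y u v} : P x y -> P u v ->
  x = u /\ y = v \/ 2 * r + 1 <= `|x - u| + `|y - v|.
Proof.
case: PL => _ Pmin _ Pxy Puv.
have [[/eqP + /eqP] | //] := Pmin _ _ (latticeB Pxy Puv); last by right.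
by rewrite !subr_eq0 => /eqP -> /eqP ->; left.
Qed.

Lemma lattice_shell_pos u v : P u v -> `|r + 1 - u| + `|v| <= r -> 0 <= v -> P (r + 1) r.
Proof.
case: PL => _ _ cover Puv near v_ge0; have P00 := lattice0.
(* (u, v) lies on the edge u + v = 2r+1; if u > r+1, the lattice points
   covering (u-r-1, 2r+2-u) and (r, -1) add up to a point of norm 2r. *)
have uv_edge : r + 1 <= u /\ u + v = 2 * r + 1.
  by have := lattice_sep Puv P00; clear -r_gt0 near v_ge0; lia.
have [u_eq|u_big] : u = r + 1 \/ r + 2 <= u by lia.
  by apply: (eq_pred2 Puv); lia.
have [u3 [v3 [P3 near3]]] := cover (u - r - 1) (2 * r + 2 - u).
have uv3_edge : u - r - 1 <= u3 /\ 2 * r + 2 - u <= v3 /\ u3 + v3 = 2 * r + 1 /\ u3 <= u - 1.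
  by have := lattice_sep P3 P00; clear -r_gt0 near3 uv_edge u_big v_ge0; lia.
have uv3_eq : u3 = u - r - 1 /\ v3 = 3 * r + 2 - u.
  by have := lattice_sep Puv P3; clear -r_gt0 uv_edge uv3_edge u_big v_ge0; lia.
have [u4 [v4 [P4 near4]]] := cover r (-1).
have uv4_edge : r <= u4 /\ v4 <= -1 /\ u4 - v4 = 2 * r + 1 /\ u4 <= 2 * r.
  by have := lattice_sep P4 P00; clear -r_gt0 near4; lia.
have uv4_eq : u4 = r /\ v4 = - r - 1.
  by have := lattice_sep Puv P4; clear -r_gt0 uv_edge uv4_edge u_big v_ge0; lia.
have := lattice_sep (latticeD P3 P4) P00.
by clear -r_gt0 uv_edge uv3_eq uv4_eq u_big v_ge0; lia.
Qed.

Lemma lattice_rot_of_shell : P (r + 1) r -> P (- r) (r + 1) ->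
  forall x y, P x y -> P (- y) x.
Proof.
move=> PA PB x y Pxy.
(* The quarter turn maps (r+1, r) to (-r, r+1) and (-r, r+1) to -(r+1, r). *)
pose S x y := P x y /\ P (- y) x.
have S0 : S 0 0 by split; rewrite ?oppr0; apply: lattice0.
have SA x' y' : S x' y' -> S (x' + (r + 1)) (y' + r) /\ S (x' - (r + 1)) (y' - r).
  case=> P1 P2; split; split.
  - exact: latticeD P1 PA.
  - by apply: (eq_pred2 (latticeD P2 PB)); lia.
  - exact: latticeB P1 PA.
  - by apply: (eq_pred2 (latticeB P2 PB)); lia.
have SB x' y' : S x' y' -> S (x' - r) (y' + (r + 1)) /\ S (x' + r) (y' - (r + 1)).
  case=> P1 P2; split; split.
  - by apply: (eq_pred2 (latticeD P1 PB)); lia.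
  - by apply: (eq_pred2 (latticeB P2 PA)); lia.
  - by apply: (eq_pred2 (latticeB P1 PB)); lia.
  - by apply: (eq_pred2 (latticeD P2 PA)); lia.
have [u [v [[Puv Pvu] near]]] := generated_lattice_cover r_gt0 S0 SA SB x y.
have [[-> ->] //|] := lattice_sep Pxy Puv; lia.
Qed.

End PerfectLattice.

Lemma perfect_lattice_swap r P : perfect_lattice r P -> perfect_lattice r (fun x y => P y x).
Proof.
case=> PB Pmin cover; split=> [x y u v | x y /Pmin | x y]; first exact: PB.
  by lia.
by have [u [v [Pvu near]]] := cover y x; exists v, u; split=> //; lia.
Qed.

Lemma perfect_lattice_rot r P : perfect_lattice r P -> perfect_lattice r (fun x y => P (- y) x).
Proof.
case=> PB Pmin cover; split=> [x y u v Pxy Puv | x y /Pmin | x y].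
- by apply: (eq_pred2 (PB _ _ _ _ Pxy Puv)); lia.
- by lia.
have [u [v [Puv near]]] := cover (- y) x; exists v, (- u); rewrite opprK; split=> //; lia.
Qed.

Lemma lattice_shell r P : 0 < r -> perfect_lattice r P -> P (r + 1) r \/ P (r + 1) (- r).
Proof.
move=> r_gt0 PL; case: (PL) => _ _ cover.
have [u [v [Puv near]]] := cover (r + 1) 0.
have [v_ge0|v_le0] : 0 <= v \/ v <= 0 by lia.
  by left; apply: (lattice_shell_pos r_gt0 PL Puv); lia.
right; have PL' := perfect_lattice_rot (perfect_lattice_swap PL).
have Puv' : P u (- - v) by rewrite opprK.
by apply: (lattice_shell_pos r_gt0 PL' Puv'); lia.
Qed.

Lemma perfect_lattice_rot_closed r P : 0 < r -> perfect_lattice r P ->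
  forall x y, P x y -> P (- y) x.
Proof.
move=> r_gt0 PL; have P00 := lattice0 PL.
have [PA|PA] := lattice_shell r_gt0 PL;
  have [PB|PB] := lattice_shell r_gt0 (perfect_lattice_rot PL); rewrite /= ?opprK in PB.
(* In the two mixed cases the shells differ by, or add up to, a point of
   norm 2; in the last case the mirror image of L is in the first case. *)
- exact: (lattice_rot_of_shell r_gt0 PL PA PB).
- by have := lattice_sep PL PA PB; lia.
- by have := lattice_sep PL (latticeD PL PA PB) P00; lia.
have swap_closed := lattice_rot_of_shell r_gt0 (perfect_lattice_swap PL) PB PA.
by move=> x y /swap_closed /swap_closed /swap_closed; rewrite !opprK.
Qed.

Section IntToZp.
Variable n : nat.
Hypothesis n_gt1 : (1 < n)%N.

Lemma val_intr_Zp (z : int) : (val (z%:~R : 'Z_n))%:Z = (z %% n)%Z.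
Proof.
have n_neq0 : n%:Z != 0 by lia.
have m_ge0 := modz_ge0 z n_neq0.
have m_lt : (z %% n)%Z < n by apply: ltz_pmod; lia.
rewrite {1}(divz_eq z n) intrD intrM -pmulrn pchar_Zp // mulr0 add0r.
rewrite -(gez0_abs m_ge0) -pmulrn /= val_Zp_nat // modn_small //; lia.
Qed.

Lemma leew1_intr (z : int) : (leew1 (z%:~R : 'Z_n))%:Z <= `|z|.
Proof.
have n_neq0 : n%:Z != 0 by lia.
have := val_intr_Zp z; have := modz_ge0 z n_neq0.
have : (z %% n)%Z < n by apply: ltz_pmod; lia.
have := divz_eq z n; set q := (z %/ n)%Z; rewrite /leew1.
have [q_ge0|q_lt0] : 0 <= q \/ q < 0 by lia.
  have : 0 <= q * n%:Z by apply: mulr_ge0.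
  lia.
have : (q + 1) * n <= 0 by apply: mulr_le0_ge0; lia.
rewrite mulrDl mul1r; lia.
Qed.

Lemma intr_Zp_eq0 (z : int) : (z%:~R : 'Z_n) = 0 -> z = 0 \/ n%:Z <= `|z|.
Proof.
move=> z0; have := val_intr_Zp z; rewrite z0 /= => mod0.
have := divz_eq z n; rewrite -mod0 addr0; set q := (z %/ n)%Z => ->.
have [->|q_neq0] := eqVneq q 0; first by left; rewrite mul0r.
have : 1 <= `|q| by lia.
by right; rewrite normrM; nia.
Qed.

Lemma leew1_lift (v : 'Z_n) : exists z : int, z%:~R = v /\ absz z = leew1 v.
Proof.
have v_lt : (val v < n)%N by case: v => m /=; rewrite (Zp_cast n_gt1).
have [le_v|gt_v] := leqP (val v) (n - val v).
  by exists (val v)%:Z; rewrite -pmulrn natr_Zp /leew1; split=> //; lia.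
exists ((val v)%:Z - n%:Z); rewrite intrB -!pmulrn natr_Zp pchar_Zp // subr0.
by rewrite /leew1; split=> //; lia.
Qed.

Lemma leew_le (v : pt n) : (leew v <= n)%N.
Proof.
have v_lt (w : 'Z_n) : (val w < n)%N by case: w => m /=; rewrite (Zp_cast n_gt1).
by have := v_lt v.1; have := v_lt v.2; rewrite /leew /leew1; lia.
Qed.

End IntToZp.

Lemma min_lee_dist_unique n (C : {set pt n}) d d' :
  min_lee_dist C d -> min_lee_dist C d' -> d = d'.
Proof.
move=> [[c [c' [cC c'C cc' <-]]] dmin] [[e [e' [eC e'C ee' <-]]] d'min].
by apply/eqP; rewrite eqn_leq dmin ?d'min.
Qed.

Section LinCode.
Variables (n : nat) (a b : 'Z_n).
Hypothesis n_gt1 : (1 < n)%N.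

Definition code_lift (x y : int) : Prop := ((x%:~R, y%:~R) : pt n) \in lin_code a b.

Lemma perfect_lattice_code_lift d : min_lee_dist (lin_code a b) d ->
  (forall u, exists2 c, c \in lin_code a b & u \in ball (d.-1 %/ 2) c) ->
  perfect_lattice (d.-1 %/ 2)%N code_lift.
Proof.
move=> [[c [c' [cC c'C cc' cc'_d]]] dmin] cover.
have d_le_n : (d <= n)%N by rewrite -cc'_d leew_le.
have C0 : ((0, 0) : pt n) \in lin_code a b.
  by apply/imsetP; exists 0 => //; rewrite !mul0r.
split.
- move=> x y u v /imsetP[k _ [kx ky]] /imsetP[k' _ [ku kv]].
  by apply/imsetP; exists (k - k') => //; rewrite !intrB kx ky ku kv !mulrBl.
- move=> x y Pxy.
  have [xy0|xy_neq0] := eqVneq ((x%:~R, y%:~R) : pt n) (0, 0).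
    case: xy0 => /(intr_Zp_eq0 n_gt1) + /(intr_Zp_eq0 n_gt1); lia.
  have := dmin _ _ Pxy C0 xy_neq0; rewrite /leed /leew /= !subr0.
  by have := leew1_intr n_gt1 x; have := leew1_intr n_gt1 y; lia.
move=> x y; have [[c1 c2] cC' near] := cover (x%:~R, y%:~R).
move: near; rewrite inE /leed /leew /= => near.
have [w1 [w1E w1_norm]] := leew1_lift n_gt1 (x%:~R - c1).
have [w2 [w2E w2_norm]] := leew1_lift n_gt1 (y%:~R - c2).
exists (x - w1), (y - w2); split; last by move: near; rewrite -w1_norm -w2_norm; lia.
by rewrite /code_lift !intrB w1E w2E !subKr.
Qed.

Lemma lin_code_rot t : (1 <= t)%N ->
  perfect_code (lin_code a b) -> t_error_correcting (lin_code a b) t ->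
  exists k : 'Z_n, k * a = b /\ k * b = - a.
Proof.
move=> t_gt0 [d [dmin cover]] [d' [d'min d'_ge]].
rewrite -(min_lee_dist_unique dmin d'min) in d'_ge.
have r_gt0 : 0 < (d.-1 %/ 2)%N%:Z by lia.
have rot_closed := perfect_lattice_rot_closed r_gt0 (perfect_lattice_code_lift dmin cover).
have lift_ab : code_lift (val a) (val b).
  by apply/imsetP; exists 1 => //; rewrite -!pmulrn !natr_Zp !mul1r.
have := rot_closed _ _ (rot_closed _ _ (rot_closed _ _ lift_ab)).
rewrite /code_lift !opprK mulrNz -!pmulrn !natr_Zp => /imsetP[k _ /pair_equal_spec[kb ka]].
by exists k; split.
Qed.

End LinCode.

Lemma card_gen2_dvdn (gT : finGroupType) (s t : gT) :
  (t ^ s \in <[t]>)%g -> (#|<<[set s; t]>>%g| %| #[s]%g * #[t]%g)%N.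
Proof.
move=> tsJ; have s_norm : (<[s]> \subset 'N(<[t]>))%g.
  rewrite cycle_subG; apply/normP/eqP.
  by rewrite eqEcard cardJg leqnn andbT -cycleJ cycle_subG.
have -> : <<[set s; t]>>%g = (<[t]> * <[s]>)%g.
  by rewrite -norm_joinEr // joingC /cycle joing_idl joing_idr.
by rewrite mulnC mul_cardG dvdn_mulr.
Qed.

Section ArraySymmetries.
Variable n : nat.
Hypothesis n_gt1 : (1 < n)%N.

Definition shift (i j : nat) : {perm arr n} := (tau1 n ^+ i * tau2 n ^+ j)%g.
Definition rot_shift (i j : nat) : {perm arr n} := (Defs.rot n * tau1 n ^+ i * tau2 n ^+ j)%g.

Lemma tau1X m (B : arr n) : (tau1 n ^+ m)%g B = [ffun p : pt n => B (p.1 - m%:R, p.2)].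
Proof.
elim: m B => [|m IHm] B; first by apply/ffunP => p; rewrite expg0 perm1 ffunE subr0; case: p.
rewrite expgSr permM permE; apply/ffunP => p; rewrite !ffunE IHm ffunE /=.
by congr (B (_, _)); rewrite mulrS; ring.
Qed.

Lemma tau2X m (B : arr n) : (tau2 n ^+ m)%g B = [ffun p : pt n => B (p.1, p.2 - m%:R)].
Proof.
elim: m B => [|m IHm] B; first by apply/ffunP => p; rewrite expg0 perm1 ffunE subr0; case: p.
rewrite expgSr permM permE; apply/ffunP => p; rewrite !ffunE IHm ffunE /=.
by congr (B (_, _)); rewrite mulrS; ring.
Qed.

Lemma shiftE i j (B : arr n) : shift i j B = [ffun p : pt n => B (p.1 - i%:R, p.2 - j%:R)].
Proof. by rewrite permM tau2X tau1X; apply/ffunP => p; rewrite !ffunE. Qed.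

Lemma rot_shiftE i j (B : arr n) :
  rot_shift i j B = [ffun p : pt n => B (-1 - (p.2 - j%:R), p.1 - i%:R)].
Proof. by rewrite !permM tau2X tau1X permE; apply/ffunP => p; rewrite !ffunE. Qed.

Lemma shiftX m i j (B : arr n) :
  (shift i j ^+ m)%g B = [ffun p : pt n => B (p.1 - (m * i)%:R, p.2 - (m * j)%:R)].
Proof.
elim: m B => [|m IHm] B; first by apply/ffunP => p; rewrite expg0 perm1 ffunE !subr0; case: p.
rewrite expgSr permM shiftE; apply/ffunP => p; rewrite !ffunE IHm ffunE /=.
by congr (B (_, _)); rewrite mulSn natrD; ring.
Qed.

Lemma order_shift_dvdn i j : (#[shift i j]%g %| n)%N.
Proof.
rewrite order_dvdn; apply/eqP/permP => B; rewrite shiftX perm1 !natrM pchar_Zp // !mul0r.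
by apply/ffunP => p; rewrite ffunE !subr0; case: p.
Qed.

Lemma order_rot_shift_dvdn i j : (#[rot_shift i j]%g %| 4)%N.
Proof.
rewrite order_dvdn; apply/eqP/permP => B.
rewrite perm1 !expgSr expg0 mul1g !(permM _ (rot_shift i j)) !rot_shiftE.
by apply/ffunP => -[x y]; rewrite !ffunE /=; congr (B (_, _)); ring.
Qed.

Lemma shift_conj_rot_shift i j (k a b : 'Z_n) : k * a = b -> k * b = - a ->
  (shift (val a) (val b) ^ rot_shift i j = shift (val a) (val b) ^+ val k)%g.
Proof.
move=> ka kb; apply: (mulgI (rot_shift i j)); rewrite conjgE mulKVg.
apply/permP => B; rewrite (permM (shift _ _)) (permM (rot_shift _ _)).
rewrite shiftX shiftE !rot_shiftE.
by apply/ffunP => -[x y]; rewrite !ffunE /= !natrM !natr_Zp ka kb; congr (B (_, _)); ring.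
Qed.

Definition relabel (s : {perm 'Z_n}) (B : arr n) : arr n := [ffun p => s (B p)].

Lemma relabel_classE (B : arr n) : relabel_class B = [set relabel s B | s : {perm 'Z_n}].
Proof.
apply/setP => C; rewrite inE; apply/existsP/imsetP => [[s /forallP sBC]|[s _ ->]].
  by exists s => //; apply/ffunP => p; rewrite ffunE (eqP (sBC p)).
by exists s; apply/forallP => p; rewrite ffunE.
Qed.

Definition relabel_commutant : {set {perm arr n}} :=
  [set g : {perm arr n} | [forall s : {perm 'Z_n}, [forall B, g (relabel s B) == relabel s (g B)]]].

Lemma relabel_commutantP (g : {perm arr n}) :
  reflect (forall s B, g (relabel s B) = relabel s (g B)) (g \in relabel_commutant).
Proof.
rewrite inE; apply: (iffP forallP) => [gP s B|gP s]; first exact/eqP/(forallP (gP s)).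
by apply/forallP => B; rewrite gP.
Qed.

Lemma relabel_commutant_group_set : group_set relabel_commutant.
Proof.
apply/group_setP; split; first by apply/relabel_commutantP => s B; rewrite !perm1.
move=> g h /relabel_commutantP gP /relabel_commutantP hP.
by apply/relabel_commutantP => s B; rewrite !permM gP hP.
Qed.

Canonical relabel_commutant_group := Group relabel_commutant_group_set.

Lemma rot_relabel : Defs.rot n \in relabel_commutant.
Proof. by apply/relabel_commutantP => s B; rewrite !permE; apply/ffunP => p; rewrite !ffunE. Qed.

Lemma tau1_relabel : tau1 n \in relabel_commutant.
Proof. by apply/relabel_commutantP => s B; rewrite !permE; apply/ffunP => p; rewrite !ffunE. Qed.

Lemma tau2_relabel : tau2 n \in relabel_commutant.
Proof. by apply/relabel_commutantP => s B; rewrite !permE; apply/ffunP => p; rewrite !ffunE. Qed.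

Lemma GS_relabel_commutant a b x : GS a b x \subset relabel_commutant.
Proof.
rewrite gen_subG; apply/subsetP => g /set2P[] ->.
  by rewrite !groupM ?groupX ?rot_relabel ?tau1_relabel ?tau2_relabel.
by rewrite groupM ?groupX ?tau1_relabel ?tau2_relabel.
Qed.

Lemma relabel_class_orbit (G : {group {perm arr n}}) (A : arr n) :
  G \subset relabel_commutant ->
  [set relabel_class (g A) | g : {perm arr n} in G] = orbit 'P^* G (relabel_class A).
Proof.
move=> G_comm; rewrite orbitE; apply: eq_in_imset => g /(subsetP G_comm) /relabel_commutantP gP.
by rewrite /= setactE !relabel_classE -imset_comp; apply: eq_imset => s; rewrite /= apermE gP.
Qed.

End ArraySymmetries.

Theorem mainTheorem3 (t n : nat) (Hn : n = (2 * t ^ 2 + 2 * t + 1)%N) (Ht : (1 <= t)%N)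
  (a b : 'Z_n) (x : pt n)
  (Hab : (a, b) != (0, 0))
  (Hperf : perfect_code (lin_code a b))
  (Hcorr : t_error_correcting (lin_code a b) t)
  (e : 'Z_n -> pt n) (He_inj : injective e)
  (He_im : [set e i | i : 'Z_n] = translate x (lin_code a b))
  (A : arr n) (HA : perfect_sudoku t e A) :
  (#|[set relabel_class (g A) | g : {perm arr n} in GS a b x]| %| 4 * n)%N.
Proof.
have n_gt1 : (1 < n)%N by rewrite Hn; nia.
have [k [ka kb]] := lin_code_rot n_gt1 Ht Hperf Hcorr.
rewrite relabel_class_orbit ?GS_relabel_commutant // card_orbit.
apply: dvdn_trans (dvdn_indexg _ _) _.
apply: dvdn_trans (card_gen2_dvdn _) _.
  by rewrite (shift_conj_rot_shift _ _ ka kb) mem_cycle.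
by rewrite dvdn_mul ?order_rot_shift_dvdn ?order_shift_dvdn.
Qed.
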